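(* For every integer $i>0$, every normal proof of $\varphi_i$ in Prawitz-style Natural Deduction for $\mathbf{M}_{\rightarrow}$ contains at least $2^i$ assumption occurrences of the formula $\xi_i$.
   Context: $\mathbf{M}_{\rightarrow}$ is purely implicational minimal propositional logic: formulas are built from propositional letters using only $\rightarrow$; there is no $\bot$. Its Natural Deduction system (Prawitz style) has only two rules: $\rightarrow$-Introduction (from a derivation of $\beta$, possibly using assumptions $\alpha$, infer $\alpha\rightarrow\beta$, discharging any number, possibly zero, of occurrences of the assumption $\alpha$) and $\rightarrow$-Elimination (from $\alpha$ and $\alpha\rightarrow\beta$ infer $\beta$; $\alpha\rightarrow\beta$ is the major premise, $\alpha$ the minor premise). A proof is a derivation with no open assumptions. A derivation is normal if no formula occurrence is both the conclusion of an $\rightarrow$-Introduction and the major premise of an $\rightarrow$-Elimination. An assumption occurrence is a leaf (top-formula occurrence) of the derivation tree. For formulas $X,Y$ let $\chi[X,Y]=(((X\rightarrow Y)\rightarrow X)\rightarrow X)\rightarrow Y$. Let $C$ and $D_1,D_2,\dots$ be distinct propositional letters. Define $\xi_1=\chi[D_1,C]$, $\xi_{i+1}=\chi[D_{i+1},\xi_i]$ for $i\ge 1$, and $\varphi_i=\xi_i\rightarrow C$ for $i\ge 1$. *)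

From Stdlib Require Import List Arith Bool.
Import ListNotations.

Inductive form : Type :=
| Var : nat -> form
| Imp : form -> form -> form.

Definition form_eq_dec : forall a b : form, {a = b} + {a <> b}.
Proof. decide equality; apply Nat.eq_dec. Defined.

(** Assumption leaves carry a discharge label; an
    ->-Introduction [ImpI a l d] (concluding a -> concl d) discharges exactly
    the open assumption leaves of [d] with formula [a] and label [l]
    (possibly none).  Using distinct labels, every choice of discharged
    occurrences in Prawitz's sense is representable.
    [ImpE d1 d2]: d1 is the derivation of the major premise a -> b,
    d2 that of the minor premise a; conclusion b. *)
Inductive deriv : Type :=
| Hyp  : form -> nat -> deriv
| ImpI : form -> nat -> deriv -> deriv
| ImpE : deriv -> deriv -> deriv.

Fixpoint concl (d : deriv) : form :=
  match d with
  | Hyp a _ => a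
  | ImpI a _ d => Imp a (concl d)
  | ImpE d1 _ => match concl d1 with Imp _ b => b | f => f end
  end.

Fixpoint wf (d : deriv) : Prop :=
  match d with
  | Hyp _ _ => True
  | ImpI _ _ d => wf d
  | ImpE d1 d2 => wf d1 /\ wf d2 /\ exists b, concl d1 = Imp (concl d2) b
  end.

Definition pair_eqb (p q : form * nat) : bool :=
  if form_eq_dec (fst p) (fst q) then Nat.eqb (snd p) (snd q) else false.

Fixpoint open_hyps (d : deriv) : list (form * nat) :=
  match d with
  | Hyp a l => [(a, l)]
  | ImpI a l d => filter (fun p => negb (pair_eqb p (a, l))) (open_hyps d)
  | ImpE d1 d2 => open_hyps d1 ++ open_hyps d2
  end.

Definition is_proof (d : deriv) (f : form) : Prop :=
  wf d /\ open_hyps d = [] /\ concl d = f.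

Fixpoint normal (d : deriv) : Prop :=
  match d with
  | Hyp _ _ => True
  | ImpI _ _ d => normal d
  | ImpE d1 d2 =>
      (match d1 with ImpI _ _ _ => False | _ => True end) /\ normal d1 /\ normal d2
  end.

Fixpoint count_assump (f : form) (d : deriv) : nat :=
  match d with
  | Hyp a _ => if form_eq_dec a f then 1 else 0
  | ImpI _ _ d => count_assump f d
  | ImpE d1 d2 => count_assump f d1 + count_assump f d2
  end.

Definition C : form := Var 0.
Definition D (i : nat) : form := Var i.

Definition chi (X Y : form) : form :=
  Imp (Imp (Imp (Imp X Y) X) X) Y.

(** xi 0 := C (auxiliary), so xi 1 = chi[D_1, C] and
    xi (i+1) = chi[D_(i+1), xi i]. *)
Fixpoint xi (i : nat) : form :=
  match i with
  | 0 => C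
  | S k => chi (D (S k)) (xi k)
  end.

Definition phi (i : nat) : form := Imp (xi i) C.

From Stdlib Require Import List Arith Lia Bool.
Import ListNotations.

(* A normal derivation of an atom from a context is an elimination spine: a
   hypothesis h = c1 -> ... -> cn -> r applied to derivations of the cj.  Hence
   any weight on pairs (goal, context) with weight(r, G) <= [h = xi_i] +
   sum_j weight(cj, G) for every admissible h in G bounds the number of xi_i
   leaves from below.

   Write xi_k = A_k -> xi_(k-1), A_k = B_k -> D_k, B_k = E_k -> D_k and
   E_k = D_k -> xi_(k-1).  Call level k settled in G when A_k or D_k is in G,
   and let u_(>k) count the unsettled levels above k.  Take weight(C, G) =
   2^(u_(>0)) and weight(D_k, G) = 2^(u_(>k)) (0 if level k is settled), both 0 once
   some E_k is in G.  Deriving D_k needs B_k, i.e. a derivation of C from D_k and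
   A_1 ... A_(k-1), which leaves the levels above k unsettled; and at the head
   xi_i, 2^(u_(>0)) = 1 + sum over unsettled k of 2^(u_(>k)).  Finally
   weight(phi_i, []) = weight(C, [xi_i]) = 2^i. *)

Fixpoint arrows (cs : list form) (r : form) : form :=
  match cs with
  | [] => r
  | c :: cs => Imp c (arrows cs r)
  end.

Lemma arrows_app cs1 cs2 r : arrows (cs1 ++ cs2) r = arrows cs1 (arrows cs2 r).
Proof. induction cs1; simpl; congruence. Qed.

Lemma form_as_arrows f : exists cs n, f = arrows cs (Var n).
Proof.
  induction f as [n|a _ b [cs [n ->]]].
  - exists [], n; reflexivity.
  - exists (a :: cs), n; reflexivity.
Qed.

Lemma arrows_var_inj cs cs' n n' :
  arrows cs (Var n) = arrows cs' (Var n') -> cs = cs' /\ n = n'.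
Proof.
  revert cs'; induction cs as [|c cs IH]; intros [|c' cs'] H; simpl in H;
    try discriminate.
  - injection H; auto.
  - injection H as -> H. destruct (IH cs' H) as [-> ->]; auto.
Qed.

Lemma open_hyps_ImpI p a l d :
  In p (open_hyps d) -> In p (open_hyps (ImpI a l d)) \/ fst p = a.
Proof.
  intros Hp; simpl; rewrite filter_In.
  destruct (pair_eqb p (a, l)) eqn:E; [right | left; auto].
  unfold pair_eqb in E; simpl in E.
  destruct (form_eq_dec (fst p) a); [assumption | discriminate].
Qed.

Definition indicator (f h : form) : nat := if form_eq_dec h f then 1 else 0.

Definition not_intro (d : deriv) : Prop :=
  match d with ImpI _ _ _ => False | _ => True end.

Section WeightBound.

Variable counted : form.
Variables hyp_ok goal_ok : form -> Prop.
Variable weight : form -> list form -> nat.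

Definition sum_weight (w cs : list form) : nat := list_sum (map (fun c => weight c w) cs).

Lemma sum_weight_app w cs1 cs2 :
  sum_weight w (cs1 ++ cs2) = sum_weight w cs1 + sum_weight w cs2.
Proof. unfold sum_weight; rewrite map_app, list_sum_app; reflexivity. Qed.

Lemma sum_weight_le w w' cs :
  (forall c, In c cs -> weight c w' <= weight c w) -> sum_weight w' cs <= sum_weight w cs.
Proof.
  unfold sum_weight; induction cs as [|c cs IH]; simpl; intros H; [lia|].
  pose proof (H c (or_introl eq_refl)); pose proof (IH (fun c' Hc' => H c' (or_intror Hc'))).
  lia.
Qed.

Lemma sum_weight_zero w cs : (forall c, In c cs -> weight c w = 0) -> sum_weight w cs = 0.
Proof.
  unfold sum_weight; induction cs as [|c cs IH]; simpl; intros H; [reflexivity|].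
  rewrite H, IH; auto.
Qed.

Hypothesis goal_ok_imp : forall a b, goal_ok (Imp a b) -> hyp_ok a /\ goal_ok b.
Hypothesis hyp_ok_premises :
  forall cs r, hyp_ok (arrows cs r) -> forall c, In c cs -> goal_ok c.
Hypothesis weight_imp : forall a b w, weight (Imp a b) w = weight b (a :: w).
Hypothesis weight_spine : forall cs r w, hyp_ok (arrows cs r) -> In (arrows cs r) w ->
  weight r w <= indicator counted (arrows cs r) + sum_weight w cs.

(* A normal derivation not ending with ->I is an elimination spine: the head
   hypothesis [arrows cs (concl d)] applied to derivations of the [cs]. *)
Definition spine_bound (d : deriv) (w : list form) : Prop :=
  exists cs, In (arrows cs (concl d)) w /\
    indicator counted (arrows cs (concl d)) + sum_weight w cs <= count_assump counted d.

Lemma weight_le_of_spine d w :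
  (forall h, In h w -> hyp_ok h) -> spine_bound d w ->
  weight (concl d) w <= count_assump counted d.
Proof.
  intros Hw [cs [Hin Hle]].
  pose proof (weight_spine cs (concl d) w (Hw _ Hin) Hin); lia.
Qed.

Lemma normal_weight_bound d : forall w,
  wf d -> normal d -> (forall h, In h w -> hyp_ok h) ->
  (forall p, In p (open_hyps d) -> In (fst p) w) ->
  (goal_ok (concl d) -> weight (concl d) w <= count_assump counted d) /\
  (not_intro d -> spine_bound d w).
Proof.
  induction d as [a l | a l d IH | d1 IH1 d2 IH2]; intros w Hwf Hn Hw Hopen.
  - assert (Hspine : spine_bound (Hyp a l) w).
    { exists []; split; [apply (Hopen (a, l)); simpl; auto|].
      unfold sum_weight, indicator; simpl; lia. }
    split; [intros _; apply weight_le_of_spine|]; auto.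
  - split; [|simpl; tauto].
    simpl; intros Hgoal; rewrite weight_imp.
    destruct (goal_ok_imp _ _ Hgoal) as [Ha Hb].
    apply (IH (a :: w)); auto.
    + intros h [<- | Hh]; auto.
    + intros p Hp; destruct (open_hyps_ImpI p a l d Hp) as [Hp' | Hfst];
        [right; apply Hopen | left]; auto.
  - simpl in Hwf, Hn. destruct Hwf as [Hwf1 [Hwf2 [b Hmajor]]].
    destruct Hn as [Hmajor_elim [Hn1 Hn2]].
    assert (Hopen1 : forall p, In p (open_hyps d1) -> In (fst p) w)
      by (intros; apply Hopen; simpl; apply in_or_app; auto).
    assert (Hopen2 : forall p, In p (open_hyps d2) -> In (fst p) w)
      by (intros; apply Hopen; simpl; apply in_or_app; auto).
    destruct (proj2 (IH1 w Hwf1 Hn1 Hw Hopen1) Hmajor_elim) as [cs [Hin Hle]].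
    assert (Hconcl : concl (ImpE d1 d2) = b) by (simpl; rewrite Hmajor; reflexivity).
    assert (Hhead : arrows cs (concl d1) = arrows (cs ++ [concl d2]) (concl (ImpE d1 d2)))
      by (rewrite arrows_app, Hconcl, Hmajor; reflexivity).
    rewrite Hhead in Hin, Hle.
    assert (Hminor : goal_ok (concl d2)).
    { apply (hyp_ok_premises _ _ (Hw _ Hin)), in_or_app; simpl; auto. }
    pose proof (proj1 (IH2 w Hwf2 Hn2 Hw Hopen2) Hminor).
    assert (Hspine : spine_bound (ImpE d1 d2) w).
    { exists (cs ++ [concl d2]); split; auto.
      rewrite sum_weight_app; unfold sum_weight at 2; cbn [map list_sum fold_right count_assump].
      lia. }
    split; [intros _; apply weight_le_of_spine|]; auto.
Qed.

Lemma closed_normal_weight_bound d :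
  wf d -> normal d -> open_hyps d = [] -> goal_ok (concl d) ->
  weight (concl d) [] <= count_assump counted d.
Proof.
  intros Hwf Hn Hopen Hgoal.
  apply (normal_weight_bound d []); auto.
  - intros h [].
  - rewrite Hopen; intros p [].
Qed.

End WeightBound.

Definition Ek (k : nat) : form := Imp (D k) (xi (pred k)).
Definition Bk (k : nat) : form := Imp (Ek k) (D k).
Definition Ak (k : nat) : form := Imp (Bk k) (D k).

Lemma xi_S m : xi (S m) = Imp (Ak (S m)) (xi m).
Proof. reflexivity. Qed.

Lemma xi_arrows m : xi m = arrows (rev (map Ak (seq 1 m))) C.
Proof.
  induction m as [|m IH]; [reflexivity|].
  rewrite xi_S, seq_S, map_app, rev_app_distr, IH; reflexivity.
Qed.

Definition layer (i : nat) (f : form) : Prop :=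
  exists k, 1 <= k <= i /\ (f = Ak k \/ f = Bk k \/ f = Ek k \/ f = D k).

Definition subform (i : nat) (f : form) : Prop :=
  layer i f \/ exists m, m <= i /\ f = xi m.

Definition hyp_form (i : nat) (f : form) : Prop := layer i f \/ f = xi i.

Definition goal_form (i : nat) (f : form) : Prop := subform i f \/ f = phi i.

Lemma subform_imp i a b : subform i (Imp a b) -> layer i a /\ subform i b.
Proof.
  intros [[k [Hk [H | [H | [H | H]]]]] | [[|m] [Hm H]]]; try discriminate;
    injection H as -> ->.
  - split; [exists k | left; exists k]; auto.
  - split; [exists k | left; exists k]; auto.
  - split; [exists k; auto | right; exists (pred k); split; [lia | reflexivity]].
  - split; [exists (S m); split; [lia | auto] | right; exists m; split; [lia | reflexivity]].
Qed.

Lemma subform_arrows i cs r :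
  subform i (arrows cs r) -> (forall c, In c cs -> layer i c) /\ subform i r.
Proof.
  induction cs as [|c cs IH]; simpl; [intros; split; [tauto | auto]|].
  intros H; destruct (subform_imp _ _ _ H) as [Hc Hr]; destruct (IH Hr) as [Hcs Hr'].
  split; [intros c' [<- | Hc']|]; auto.
Qed.

Lemma hyp_form_subform i f : hyp_form i f -> subform i f.
Proof. intros [H | ->]; [left | right; exists i]; auto. Qed.

Lemma goal_form_imp i a b : goal_form i (Imp a b) -> hyp_form i a /\ goal_form i b.
Proof.
  intros [H | H].
  - destruct (subform_imp _ _ _ H); split; left; auto.
  - injection H as -> ->; split; [right | left; right; exists 0; split; [lia|]]; auto.
Qed.

Lemma hyp_form_premises i cs r :
  hyp_form i (arrows cs r) -> forall c, In c cs -> goal_form i c.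
Proof.
  intros H c Hc; left; left.
  exact (proj1 (subform_arrows _ _ _ (hyp_form_subform _ _ H)) c Hc).
Qed.

Definition inb (f : form) (w : list form) : bool :=
  if in_dec form_eq_dec f w then true else false.

Lemma inb_In f w : inb f w = true <-> In f w.
Proof. unfold inb; destruct (in_dec form_eq_dec f w); split; auto; discriminate. Qed.

Lemma inb_cons_neq f g w : f <> g -> inb g (f :: w) = inb g w.
Proof.
  intros Hfg; apply eq_true_iff_eq; rewrite !inb_In; simpl.
  split; [intros [-> | H]; [congruence |] |]; auto.
Qed.

Definition E_avail (i : nat) (w : list form) : bool :=
  existsb (fun k => inb (Ek k) w) (seq 1 i).

Lemma E_avail_spec i w : E_avail i w = true <-> exists k, 1 <= k <= i /\ In (Ek k) w.
Proof.
  unfold E_avail; rewrite existsb_exists.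
  split; intros [k [Hk H]]; exists k; rewrite in_seq, inb_In in *; split; auto; lia.
Qed.

Definition settled (w : list form) (k : nat) : bool := inb (Ak k) w || inb (D k) w.

Lemma settled_spec w k : settled w k = true <-> In (Ak k) w \/ In (D k) w.
Proof. unfold settled; rewrite orb_true_iff, !inb_In; reflexivity. Qed.

Definition unsettled (w : list form) (a n : nat) : nat :=
  length (filter (fun k => negb (settled w k)) (seq a n)).

Definition weight_C (i : nat) (w : list form) : nat :=
  if E_avail i w then 0 else 2 ^ unsettled w 1 i.

Definition weight_D (i : nat) (w : list form) (k : nat) : nat :=
  if E_avail i w || settled w k then 0 else 2 ^ unsettled w (S k) (i - k).

Lemma weight_C_zero i w : E_avail i w = true -> weight_C i w = 0.
Proof. unfold weight_C; intros ->; reflexivity. Qed.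

Lemma weight_D_zero i w k :
  E_avail i w = true \/ settled w k = true -> weight_D i w k = 0.
Proof. unfold weight_D; rewrite <- orb_true_iff; intros ->; reflexivity. Qed.

Fixpoint weight (i : nat) (f : form) (w : list form) : nat :=
  match f with
  | Imp a b => weight i b (a :: w)
  | Var 0 => weight_C i w
  | Var k => weight_D i w k
  end.

Lemma weight_D_var i k w : 1 <= k -> weight i (D k) w = weight_D i w k.
Proof. destruct k; [lia | reflexivity]. Qed.

Lemma weight_arrows i cs r w : weight i (arrows cs r) w = weight i r (rev cs ++ w).
Proof.
  revert w; induction cs as [|c cs IH]; intros w; [reflexivity|].
  simpl; rewrite IH, <- app_assoc; reflexivity.
Qed.

Lemma weight_Ek i k w :
  weight i (Ek k) w = weight_C i (map Ak (seq 1 (pred k)) ++ D k :: w).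
Proof.
  unfold Ek; simpl; rewrite xi_arrows, weight_arrows, rev_involutive; reflexivity.
Qed.

Lemma filter_length_le (A : Type) (p q : A -> bool) (l : list A) :
  (forall x, In x l -> p x = true -> q x = true) ->
  length (filter p l) <= length (filter q l).
Proof.
  induction l as [|x l IH]; simpl; intros H; [lia|].
  specialize (IH (fun y Hy => H y (or_intror Hy))).
  destruct (p x) eqn:Ep; [rewrite (H x (or_introl eq_refl) Ep); simpl; lia|].
  destruct (q x); simpl; lia.
Qed.

Lemma unsettled_le w w' a n :
  (forall k, a <= k < a + n -> settled w k = true -> settled w' k = true) ->
  unsettled w' a n <= unsettled w a n.
Proof.
  intros H; apply filter_length_le; intros k Hk.
  rewrite in_seq in Hk; rewrite !negb_true_iff; intros E'.
  destruct (settled w k) eqn:E; [rewrite (H k Hk E) in E'; discriminate | reflexivity].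
Qed.

Lemma E_avail_incl i w w' : incl w w' -> E_avail i w = true -> E_avail i w' = true.
Proof. rewrite !E_avail_spec; intros Hincl [k [Hk H]]; exists k; auto. Qed.

Lemma settled_incl w w' k : incl w w' -> settled w k = true -> settled w' k = true.
Proof. rewrite !settled_spec; intros Hincl [H | H]; auto. Qed.

Lemma if_zero_le (b b' : bool) (x x' : nat) :
  (b = true -> b' = true) -> x' <= x -> (if b' then 0 else x') <= (if b then 0 else x).
Proof. destruct b, b'; intuition (try discriminate; lia). Qed.

Lemma weight_antitone i f : forall w w', incl w w' -> weight i f w' <= weight i f w.
Proof.
  induction f as [[|k] | a _ b IH]; intros w w' Hincl; simpl.
  - apply if_zero_le; [apply E_avail_incl; auto|].
    apply Nat.pow_le_mono_r; [lia|]; apply unsettled_le; intros; eapply settled_incl; eauto.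
  - apply if_zero_le.
    + rewrite !orb_true_iff; intros [H | H];
        [left; eapply E_avail_incl | right; eapply settled_incl]; eauto.
    + apply Nat.pow_le_mono_r; [lia|]; apply unsettled_le; intros; eapply settled_incl; eauto.
  - apply IH; intros x [<- | Hx]; simpl; auto.
Qed.

Definition neutral (f : form) : Prop := forall k, f <> Ak k /\ f <> Ek k /\ f <> D k.

Lemma neutral_Bk j : neutral (Bk j).
Proof. intros k; unfold Ak, Bk, Ek, D; repeat split; congruence. Qed.

Lemma neutral_xi m : neutral (xi (S m)).
Proof. intros k; rewrite xi_S; unfold Ak, Bk, Ek, D; repeat split; congruence. Qed.

Lemma E_avail_neutral i f w : neutral f -> E_avail i (f :: w) = E_avail i w.
Proof.
  intros Hf; apply eq_true_iff_eq; rewrite !E_avail_spec.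
  split; intros [k [Hk H]]; exists k; split; auto; [|right; auto].
  destruct H as [H | H]; [destruct (Hf k) as [_ [[] _]]|]; auto.
Qed.

Lemma settled_neutral f w k : neutral f -> settled (f :: w) k = settled w k.
Proof.
  intros Hf; destruct (Hf k) as [HA [_ HD]]; unfold settled.
  rewrite !inb_cons_neq; auto.
Qed.

Lemma weight_C_neutral i f w : neutral f -> weight_C i (f :: w) = weight_C i w.
Proof.
  intros Hf; unfold weight_C, unsettled; rewrite E_avail_neutral by auto.
  erewrite filter_ext; [reflexivity|]; intros k; rewrite settled_neutral; auto.
Qed.

Lemma weight_D_neutral i f w k : neutral f -> weight_D i (f :: w) k = weight_D i w k.
Proof.
  intros Hf; unfold weight_D, unsettled; rewrite E_avail_neutral, settled_neutral by auto.
  erewrite filter_ext; [reflexivity|]; intros j; rewrite settled_neutral; auto.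
Qed.

Lemma weight_Ak i k w : 1 <= k -> weight i (Ak k) w = weight_D i w k.
Proof.
  intros Hk; change (weight i (D k) (Bk k :: w) = weight_D i w k).
  rewrite weight_D_var, weight_D_neutral by (auto using neutral_Bk); reflexivity.
Qed.

Lemma weight_layer_in_context i c w : layer i c -> In c w -> weight i c w = 0.
Proof.
  intros [k [Hk [-> | [-> | [-> | ->]]]]] Hin.
  - rewrite weight_Ak by lia; apply weight_D_zero; right; apply settled_spec; auto.
  - change (weight i (D k) (Ek k :: w) = 0); rewrite weight_D_var by lia.
    apply weight_D_zero; left; apply E_avail_spec; exists k; simpl; auto.
  - rewrite weight_Ek; apply weight_C_zero, E_avail_spec; exists k.
    rewrite in_app_iff; simpl; auto.
  - rewrite weight_D_var by lia; apply weight_D_zero; right; apply settled_spec; auto.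
Qed.

Lemma pow2_count_seq (p : nat -> bool) i a n : a + n = S i ->
  2 ^ length (filter p (seq a n)) =
  1 + list_sum (map (fun j => if p j then 2 ^ length (filter p (seq (S j) (i - j))) else 0)
                    (seq a n)).
Proof.
  revert a; induction n as [|n IH]; intros a Ha; [reflexivity|].
  specialize (IH (S a) ltac:(lia)).
  cbn [seq filter map]; change (list_sum (?x :: ?l)) with (x + list_sum l).
  destruct (p a); [replace (i - a) with n by lia; cbn [length]; rewrite Nat.pow_succ_r'|]; lia.
Qed.

Lemma list_sum_rev l : list_sum (rev l) = list_sum l.
Proof. induction l; simpl; [|rewrite list_sum_app; simpl]; lia. Qed.

Lemma unsettled_split w k i : k <= i ->
  unsettled w 1 i = unsettled w 1 k + unsettled w (S k) (i - k).
Proof.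
  intros Hk; unfold unsettled.
  replace i with (k + (i - k)) at 1 by lia.
  rewrite seq_app, filter_app, length_app; reflexivity.
Qed.

Lemma weight_C_le_xi_spine i w :
  weight_C i w <= 1 + sum_weight (weight i) w (rev (map Ak (seq 1 i))).
Proof.
  unfold sum_weight; rewrite map_rev, list_sum_rev, map_map.
  rewrite (map_ext_in _ (weight_D i w))
    by (intros j Hj; rewrite in_seq in Hj; apply weight_Ak; lia).
  unfold weight_C; destruct (E_avail i w) eqn:HE; [lia|].
  unfold unsettled; rewrite (pow2_count_seq _ i 1 i) by lia.
  apply Nat.eq_le_incl; do 2 f_equal; apply map_ext; intros j.
  unfold weight_D, unsettled; rewrite HE; destruct (settled w j); reflexivity.
Qed.

(* Proving [D k] from [B k] means proving [C] under [D k] and [A 1 .. A (k-1)]: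
   this settles only levels [<= k]. *)
Lemma weight_D_le_weight_Ek i k w : 1 <= k <= i -> weight_D i w k <= weight i (Ek k) w.
Proof.
  intros Hk; rewrite weight_Ek; set (w2 := map Ak (seq 1 (pred k)) ++ D k :: w).
  assert (Hw2 : forall f, In f w2 -> In f w \/ f = D k \/ exists j, j < k /\ f = Ak j).
  { intros f Hf; unfold w2 in Hf; rewrite in_app_iff, in_map_iff in Hf; simpl in Hf.
    destruct Hf as [[j [<- Hj]] | [<- | Hf]]; auto.
    right; right; exists j; rewrite in_seq in Hj; split; [lia | auto]. }
  unfold weight_D, weight_C.
  destruct (E_avail i w || settled w k) eqn:Hw; [lia|].
  apply orb_false_iff in Hw as [HE Hs].
  replace (E_avail i w2) with false.
  2:{ symmetry; apply not_true_iff_false; rewrite E_avail_spec; intros [j [Hj Hin]].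
      destruct (Hw2 _ Hin) as [H | [H | [j' [_ H]]]];
        [| revert H; unfold Ak, Bk, Ek, D; congruence ..].
      rewrite <- not_true_iff_false, E_avail_spec in HE; eauto. }
  apply Nat.pow_le_mono_r; [lia|].
  rewrite (unsettled_split w2 k i) by lia.
  enough (unsettled w (S k) (i - k) <= unsettled w2 (S k) (i - k)) by lia.
  apply unsettled_le; intros j Hj; rewrite !settled_spec.
  intros [Hin | Hin]; destruct (Hw2 _ Hin) as [H | [H | [j' [Hj' H]]]]; auto;
    try (revert H; unfold Ak, Bk, Ek, D; congruence).
  - assert (j = j') by (revert H; unfold Ak, Bk, Ek, D; congruence); lia.
  - assert (j = k) by (revert H; unfold D; congruence); lia.
Qed.

Lemma weight_var_spine i cs n w :
  1 <= i -> hyp_form i (arrows cs (Var n)) -> In (arrows cs (Var n)) w ->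
  weight i (Var n) w <= indicator (xi i) (arrows cs (Var n)) + sum_weight (weight i) w cs.
Proof.
  intros Hi [[k [Hk [H | [H | [H | H]]]]] | H] Hin; rewrite H in Hin |- *.
  - change (Ak k) with (arrows [Bk k] (Var k)) in H.
    apply arrows_var_inj in H as [-> ->]; rewrite (weight_D_var i k) by lia.
    rewrite weight_D_zero; [lia|]; right; apply settled_spec; auto.
  - change (Bk k) with (arrows [Ek k] (Var k)) in H.
    apply arrows_var_inj in H as [-> ->]; rewrite (weight_D_var i k) by lia.
    pose proof (weight_D_le_weight_Ek i k w Hk).
    unfold sum_weight; cbn [map list_sum fold_right]; lia.
  - assert (Ek k = arrows (D k :: rev (map Ak (seq 1 (pred k)))) (Var 0)) as HE
      by (unfold Ek; rewrite xi_arrows; reflexivity).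
    rewrite HE in H; apply arrows_var_inj in H as [-> ->].
    simpl; rewrite weight_C_zero; [lia|]; apply E_avail_spec; eauto.
  - change (D k) with (arrows [] (Var k)) in H.
    apply arrows_var_inj in H as [-> ->]; rewrite (weight_D_var i k) by lia.
    rewrite weight_D_zero; [lia|]; right; apply settled_spec; auto.
  - rewrite xi_arrows in H; apply arrows_var_inj in H as [-> ->].
    unfold indicator; destruct (form_eq_dec (xi i) (xi i)); [|congruence].
    apply weight_C_le_xi_spine.
Qed.

(* Premises of the goal are layer formulas, so once moved into the context they
   weigh nothing. *)
Lemma xi_weight_spine i cs r w :
  1 <= i -> hyp_form i (arrows cs r) -> In (arrows cs r) w ->
  weight i r w <= indicator (xi i) (arrows cs r) + sum_weight (weight i) w cs.
Proof.
  intros Hi Hh Hin.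
  destruct (form_as_arrows r) as [ps [n ->]].
  rewrite weight_arrows, <- arrows_app in *.
  assert (Hincl : incl w (rev ps ++ w)) by apply incl_appr, incl_refl.
  pose proof (weight_var_spine i (cs ++ ps) n (rev ps ++ w) Hi Hh (Hincl _ Hin)) as Hle.
  rewrite sum_weight_app in Hle.
  assert (Hps : sum_weight (weight i) (rev ps ++ w) ps = 0).
  { destruct (subform_arrows _ _ _ (hyp_form_subform _ _ Hh)) as [Hlayer _].
    apply sum_weight_zero; intros c Hc; apply weight_layer_in_context.
    - apply Hlayer, in_or_app; auto.
    - apply in_or_app; left; apply in_rev; rewrite rev_involutive; auto. }
  pose proof (sum_weight_le (weight i) w (rev ps ++ w) cs
    (fun c _ => weight_antitone i c _ _ Hincl)).
  lia.
Qed.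

Lemma weight_phi i : 1 <= i -> weight i (phi i) [] = 2 ^ i.
Proof.
  destruct i as [|m]; [lia|]; intros _.
  change (weight_C (S m) [xi (S m)] = 2 ^ S m).
  rewrite weight_C_neutral by apply neutral_xi.
  unfold weight_C, unsettled.
  replace (E_avail (S m) []) with false
    by (symmetry; apply not_true_iff_false; rewrite E_avail_spec; intros [k [_ []]]).
  rewrite filter_ext with (g := fun _ => true), filter_true, length_seq; [reflexivity|].
  intros k; replace (settled [] k) with false; [reflexivity|].
  symmetry; apply not_true_iff_false; rewrite settled_spec; intros [[] | []].
Qed.

Theorem mainTheorem1 :
  forall (i : nat), 0 < i ->
  forall d : deriv, is_proof d (phi i) -> normal d ->
  2 ^ i <= count_assump (xi i) d.
Proof.
  intros i Hi d [Hwf [Hopen Hconcl]] Hn.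
  rewrite <- weight_phi, <- Hconcl by lia.
  apply (closed_normal_weight_bound (xi i) (hyp_form i) (goal_form i) (weight i)
           (goal_form_imp i) (hyp_form_premises i) (fun _ _ _ => eq_refl)
           (fun cs r w => xi_weight_spine i cs r w Hi)); auto.
  rewrite Hconcl; right; reflexivity.
Qed.
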